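(* Let $(M,\rho)$ be a complete metric space, let $f:M\to\mathbb{R}\cup\{+\infty\}$ be proper, lower semicontinuous and bounded below, and let $g:M\to\mathbb{R}$ be continuous with $$|\widetilde\nabla f|(x)>|\widetilde\nabla g|(x)\qquad\text{for all }x\in\operatorname{dom} f\setminus 0\operatorname{Crit} f.$$ Then for every $\varepsilon>0$ and every $x_0\in\operatorname{dom} f$ there exists $x\in\varepsilon\operatorname{Crit} f$ such that $$f(x)\le f(x_0)-\varepsilon\rho(x,x_0)\quad\text{and}\quad f(x_0)-g(x_0)\ge f(x)-g(x).$$ In particular, $f(y)-g(y)\ge\inf_{\varepsilon\operatorname{Crit} f}(f-g)$ for all $y\in\operatorname{dom} f$ and all $\varepsilon>0$.
   Context: $\operatorname{dom} f:=\{x:f(x)<+\infty\}$. $[t]^+:=\max\{0,t\}$ (with $[f(x)-f(y)]^+:=0$ if $f(y)=+\infty$). For $x\in\operatorname{dom} f$, the global slope is $|\widetilde\nabla f|(x):=\sup_{y\neq x}\frac{[f(x)-f(y)]^+}{\rho(x,y)}\in[0,+\infty]$. For $\varepsilon\ge0$, $\varepsilon\operatorname{Crit} f:=\{x\in\operatorname{dom} f:\ |\widetilde\nabla f|(x)\le\varepsilon\}$. *)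

From Stdlib Require Import Reals.
From Coquelicot Require Import Coquelicot.
Open Scope R_scope.

Definition is_metric {M : Type} (rho : M -> M -> R) : Prop :=
  (forall x y, 0 <= rho x y) /\
  (forall x y, rho x y = 0 <-> x = y) /\
  (forall x y, rho x y = rho y x) /\
  (forall x y z, rho x z <= rho x y + rho y z).

Definition metric_complete {M : Type} (rho : M -> M -> R) : Prop :=
  forall u : nat -> M,
    (forall e, 0 < e -> exists N, forall m n, (N <= m)%nat -> (N <= n)%nat ->
        rho (u m) (u n) < e) ->
    exists l, forall e, 0 < e -> exists N, forall n, (N <= n)%nat -> rho (u n) l < e.

Definition dom {M : Type} (f : M -> Rbar) (x : M) : Prop := Rbar_lt (f x) p_infty.

Definition proper_fun {M : Type} (f : M -> Rbar) : Prop := exists x, dom f x.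

Definition bounded_below {M : Type} (f : M -> Rbar) : Prop :=
  exists m : R, forall x, Rbar_le (Finite m) (f x).

Definition lsc {M : Type} (rho : M -> M -> R) (f : M -> Rbar) : Prop :=
  forall x (a : R), Rbar_lt (Finite a) (f x) ->
    exists d, 0 < d /\ forall y, rho x y < d -> Rbar_lt (Finite a) (f y).

Definition metric_continuous {M : Type} (rho : M -> M -> R) (g : M -> R) : Prop :=
  forall x e, 0 < e -> exists d, 0 < d /\ forall y, rho x y < d -> Rabs (g y - g x) < e.

(* [a - b]^+, with the convention [f(x) - f(y)]^+ := 0 when f(y) = +oo *)
Definition pos_diff (a b : Rbar) : R :=
  match a, b with
  | Finite a, Finite b => Rmax 0 (a - b)
  | _, _ => 0
  end.

(* global slope |~grad f|(x) = sup_{y <> x} [f x - f y]^+ / rho(x,y) in [0,+oo]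
   (0 is included in the set so that the sup over an empty family is 0). *)
Definition global_slope {M : Type} (rho : M -> M -> R) (f : M -> Rbar) (x : M) : Rbar :=
  Lub_Rbar (fun r => r = 0 \/ exists y, y <> x /\ r = pos_diff (f x) (f y) / rho x y).

Definition eps_crit {M : Type} (rho : M -> M -> R) (f : M -> Rbar) (eps : R) (x : M) : Prop :=
  dom f x /\ Rbar_le (global_slope rho f x) (Finite eps).

Definition inf_crit {M : Type} (rho : M -> M -> R) (f : M -> Rbar) (g : M -> R) (eps : R) : Rbar :=
  Glb_Rbar (fun r => exists x, eps_crit rho f eps x /\ Finite r = Rbar_minus (f x) (Finite (g x))).

(* The set C = {y | (f - g) y <= (f - g) x0} is
   closed (f is lsc, g continuous) and f is real and bounded below on C, so
   Ekeland's variational principle on C gives x in C with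
   f x + eps rho(x0, x) <= f x0 and f x <= f y + eps rho(x, y) for all y in C.
   Such an x is eps-critical: if the global slope of f at x exceeded eps, then
   x would not be 0-critical, so the slope of f would also exceed that of g;
   a single quotient witnessing both gives y with
   f y < f x - t rho(x, y) and g x - g y <= t rho(x, y) for some t >= eps,
   hence y in C below the Ekeland cone at x, which is impossible. *)
From Stdlib Require Import Reals Lra Lia Classical ClassicalEpsilon.
From Coquelicot Require Import Coquelicot.
Open Scope R_scope.

Definition converges {M : Type} (rho : M -> M -> R) (u : nat -> M) (l : M) : Prop :=
  forall e, 0 < e -> exists N, forall n, (N <= n)%nat -> rho (u n) l < e.

Definition seq_closed {M : Type} (rho : M -> M -> R) (C : M -> Prop) : Prop :=
  forall (u : nat -> M) l, (forall n, C (u n)) -> converges rho u l -> C l.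

Definition lsc_on {M : Type} (rho : M -> M -> R) (C : M -> Prop) (F : M -> R) : Prop :=
  forall l a, C l -> a < F l -> exists d, 0 < d /\ forall y, C y -> rho l y < d -> a < F y.

Lemma inv_succ_small (r : R) : 0 < r -> exists N : nat, / (INR N + 1) < r.
Proof.
  intros Hr. destruct (archimed_cor1 r Hr) as [N [HN HN0]].
  exists N. apply Rle_lt_trans with (/ INR N); auto.
  apply Rinv_le_contravar. apply lt_0_INR; auto. lra.
Qed.

Lemma le_inv_succ_nonpos (a c : R) :
  (forall n : nat, a <= c * / (INR n + 1)) -> a <= 0.
Proof.
  intros Ha. apply Rnot_lt_le. intros Hpos.
  assert (Hc : 0 < c).
  { specialize (Ha O). simpl in Ha. rewrite Rplus_0_l, Rinv_1 in Ha. lra. }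
  destruct (inv_succ_small (a / c)) as [N HN].
  { apply Rdiv_lt_0_compat; lra. }
  specialize (Ha N).
  apply Rmult_lt_compat_l with (r := c) in HN; [|lra].
  replace (c * (a / c)) with a in HN by (field; lra). lra.
Qed.

Lemma approx_argmin (M : Type) (P : M -> Prop) (F : M -> R) :
  (exists y, P y) -> (exists m, forall y, P y -> m <= F y) ->
  forall d, 0 < d -> exists y, P y /\ forall z, P z -> F y <= F z + d.
Proof.
  intros [y0 Hy0] [m Hm] d Hd.
  set (E := fun r => exists y, P y /\ r = - F y).
  assert (HB : bound E).
  { exists (- m). intros r [y [Py ->]]. specialize (Hm y Py). lra. }
  assert (HE : exists r, E r) by (exists (- F y0); exists y0; split; auto).
  destruct (completeness E HB HE) as [s [Hub Hlub]].
  apply NNPP. intros Hn.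
  assert (Hu : is_upper_bound E (s - d)).
  { intros r [y [Py ->]].
    assert (exists z, P z /\ F z + d < F y) as [z [Pz Hz]].
    { apply NNPP. intros Hn2. apply Hn. exists y. split; auto.
      intros z Pz. apply Rnot_lt_le. intros Hlt. apply Hn2. exists z. auto. }
    assert (- F z <= s) by (apply Hub; exists z; auto). lra. }
  specialize (Hlub _ Hu). lra.
Qed.

Section Ekeland.

Variables (M : Type) (rho : M -> M -> R) (C : M -> Prop) (F : M -> R) (eps : R).
Hypothesis Hmet : is_metric rho.
Hypothesis Hcompl : metric_complete rho.
Hypothesis Heps : 0 < eps.
Hypothesis Hclosed : seq_closed rho C.
Hypothesis Hlsc : lsc_on rho C F.
Hypothesis Hbdd : exists m, forall y, C y -> m <= F y.

Definition improving (x y : M) : Prop := C y /\ F y + eps * rho x y <= F x.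

Lemma improving_refl (x : M) : C x -> improving x x.
Proof.
  intros Cx. destruct Hmet as [_ [Hzero _]].
  split; auto. rewrite (proj2 (Hzero x x) eq_refl). lra.
Qed.

Lemma improving_trans (x y z : M) : improving x y -> improving y z -> improving x z.
Proof.
  intros [_ Hxy] [Cz Hyz]. destruct Hmet as [_ [_ [_ Htri]]].
  split; auto. specialize (Htri x y z).
  apply Rmult_le_compat_l with (r := eps) in Htri; lra.
Qed.

(* Each improving set is closed: C is closed, F is lsc and rho x is continuous. *)
Lemma improving_closed (x : M) : seq_closed rho (improving x).
Proof.
  destruct Hmet as [_ [_ [Hsym Htri]]].
  intros u l Hu Hl.
  assert (Cl : C l) by (apply (Hclosed u l); [intros n; apply Hu | exact Hl]).
  split; auto. apply Rnot_lt_le. intros Hlt.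
  set (c := F x - eps * rho x l).
  assert (Hc : c < F l) by (unfold c; lra).
  set (a := (c + F l) / 2).
  destruct (Hlsc l a Cl) as [d [Hd Hld]]. { unfold a. lra. }
  destruct (Hl (Rmin d ((a - c) / eps))) as [N HN].
  { apply Rmin_glb_lt; auto. apply Rdiv_lt_0_compat; auto. unfold a; lra. }
  specialize (HN N (le_n N)).
  assert (Hnear : rho (u N) l < d) by (eapply Rlt_le_trans; [exact HN | apply Rmin_l]).
  assert (Hclose : eps * rho (u N) l < a - c).
  { assert (H : rho (u N) l < (a - c) / eps)
      by (eapply Rlt_le_trans; [exact HN | apply Rmin_r]).
    apply Rmult_lt_compat_l with (r := eps) in H; auto.
    replace (eps * ((a - c) / eps)) with (a - c) in H by (field; lra). exact H. }
  assert (Hbig : a < F (u N)) by (apply Hld; [apply Hu | rewrite Hsym; exact Hnear]).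
  destruct (Hu N) as [_ HuN].
  pose proof (Htri x (u N) l).
  unfold c in *. nra.
Qed.

Lemma minimizing_sequence (x0 : M) : C x0 ->
  exists u : nat -> M, u O = x0 /\ forall n,
    improving (u n) (u (S n)) /\
    forall z, improving (u n) z -> F (u (S n)) <= F z + / (INR n + 1).
Proof.
  intros Cx0. destruct Hbdd as [m Hm].
  assert (Hstep : forall p : nat * M, exists y, C (snd p) ->
            improving (snd p) y /\
            forall z, improving (snd p) z -> F y <= F z + / (INR (fst p) + 1)).
  { intros [n x]. simpl. destruct (classic (C x)) as [Cx | nCx].
    - destruct (approx_argmin M (improving x) F) with (d := / (INR n + 1))
        as [y [Hy Hmin]].
      + exists x. apply improving_refl, Cx.
      + exists m. intros y [Cy _]. auto.
      + apply Rinv_0_lt_compat. pose proof (pos_INR n). lra.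
      + exists y. auto.
    - exists x. contradiction. }
  destruct (choice _ Hstep) as [step Hstep'].
  set (u := fix u n := match n with O => x0 | S k => step (k, u k) end).
  assert (Cu : forall n, C (u n)).
  { induction n as [|n IH]; simpl; auto. apply (Hstep' (n, u n) IH). }
  exists u. split; auto. intros n. apply (Hstep' (n, u n) (Cu n)).
Qed.

Theorem ekeland (x0 : M) : C x0 ->
  exists x, improving x0 x /\ forall y, C y -> F x <= F y + eps * rho x y.
Proof.
  intros Cx0. pose proof Hmet as [Hpos [Hzero [Hsym Htri]]].
  destruct (minimizing_sequence x0 Cx0) as [u [Hu0 Hu]].
  assert (Hchain : forall n k, improving (u n) (u (n + k)%nat)).
  { intros n k. induction k as [|k IH].
    - rewrite Nat.add_0_r. apply improving_refl.
      destruct n; [rewrite Hu0; exact Cx0 | apply (proj1 (Hu n))].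
    - rewrite Nat.add_succ_r. eapply improving_trans; [exact IH | apply Hu]. }
  assert (Hshrink : forall n z w, improving (u (S n)) z -> improving (u (S n)) w ->
            eps * rho z w <= 2 * / (INR n + 1)).
  { assert (Hrad : forall n z, improving (u (S n)) z ->
              eps * rho (u (S n)) z <= / (INR n + 1)).
    { intros n z Hz.
      pose proof (proj2 (Hu n) z (improving_trans _ _ _ (proj1 (Hu n)) Hz)).
      destruct Hz as [_ Hz]. lra. }
    intros n z w Hz Hw. pose proof (Hrad n z Hz). pose proof (Hrad n w Hw).
    pose proof (Htri z (u (S n)) w) as Htzw. rewrite (Hsym z (u (S n))) in Htzw.
    apply Rmult_le_compat_l with (r := eps) in Htzw; lra. }
  assert (Hcauchy : forall e, 0 < e -> exists N, forall p q, (N <= p)%nat -> (N <= q)%nat ->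
            rho (u p) (u q) < e).
  { intros e He. destruct (inv_succ_small (eps * e / 2)) as [N HN].
    { apply Rdiv_lt_0_compat; [apply Rmult_lt_0_compat|]; lra. }
    exists (S N). intros p q Hp Hq.
    pose proof (Hshrink N (u p) (u q)) as H.
    replace p with (S N + (p - S N))%nat in H at 1 by lia.
    replace q with (S N + (q - S N))%nat in H at 1 by lia.
    specialize (H (Hchain _ _) (Hchain _ _)).
    apply Rmult_lt_reg_l with eps; auto. lra. }
  destruct (Hcompl u Hcauchy) as [l Hl].
  assert (Hlim : forall n, improving (u n) l).
  { intros n. apply (improving_closed (u n) (fun k => u (n + k)%nat)); [apply Hchain|].
    intros e He. destruct (Hl e He) as [N HN]. exists N. intros k Hk. apply HN. lia. }
  exists l. split; [rewrite <- Hu0; apply Hlim|].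
  intros y Cy. apply Rnot_lt_le. intros Hy.
  assert (Hly : improving l y) by (split; auto; lra).
  assert (Hdist : eps * rho l y <= 0).
  { apply (le_inv_succ_nonpos _ 2). intros n.
    apply Hshrink; [apply Hlim | eapply improving_trans; [apply Hlim | exact Hly]]. }
  assert (Hyl : l = y) by (apply Hzero; specialize (Hpos l y); nra).
  subst y. rewrite (proj2 (Hzero l l) eq_refl) in Hy. lra.
Qed.

End Ekeland.

Lemma Rbar_interpolate (a b : Rbar) (e : R) :
  Rbar_lt a b -> Rbar_lt (Finite e) b ->
  exists t, e <= t /\ Rbar_le a (Finite t) /\ Rbar_lt (Finite t) b.
Proof.
  intros Hab Heb. destruct a as [a| |].
  - exists (Rmax e a). split; [apply Rmax_l|]. split; [apply Rmax_r|].
    unfold Rmax. destruct (Rle_dec e a); assumption.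
  - destruct b; contradiction.
  - exists e. split; [lra|]. split; [exact I | exact Heb].
Qed.

Lemma pos_diff_quotient_le (a b r t : R) :
  0 < r -> pos_diff (Finite a) (Finite b) / r <= t -> a - b <= t * r.
Proof.
  intros Hr Hq. simpl in Hq.
  apply Rmult_le_compat_r with (r := r) in Hq; [|lra].
  replace (Rmax 0 (a - b) / r * r) with (Rmax 0 (a - b)) in Hq by (field; lra).
  pose proof (Rmax_r 0 (a - b)). lra.
Qed.

Lemma pos_diff_quotient_gt (a r t : R) (b : Rbar) :
  0 < r -> 0 <= t -> t < pos_diff (Finite a) b / r ->
  exists fb, b = Finite fb /\ t * r < a - fb.
Proof.
  intros Hr Ht Hq. destruct b as [fb| |]; simpl in Hq;
    try (unfold Rdiv in Hq; rewrite Rmult_0_l in Hq; lra).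
  exists fb. split; auto.
  apply Rmult_lt_compat_r with (r := r) in Hq; auto.
  replace (Rmax 0 (a - fb) / r * r) with (Rmax 0 (a - fb)) in Hq by (field; lra).
  unfold Rmax in Hq. destruct (Rle_dec 0 (a - fb)); nra.
Qed.

Lemma bounded_below_finite (M : Type) (f : M -> Rbar) (x : M) :
  bounded_below f -> Rbar_lt (f x) p_infty -> f x = Finite (real (f x)).
Proof.
  intros [m Hm] Hx. specialize (Hm x).
  destruct (f x); simpl in *; auto; contradiction.
Qed.

Section GlobalSlope.

Variables (M : Type) (rho : M -> M -> R).
Hypothesis Hmet : is_metric rho.

Lemma dist_pos (x y : M) : y <> x -> 0 < rho x y.
Proof.
  intros Hyx. destruct Hmet as [Hpos [Hzero _]].
  destruct (Rle_lt_or_eq_dec 0 (rho x y) (Hpos x y)) as [Hlt | Heq]; auto.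
  symmetry in Heq. apply Hzero in Heq. congruence.
Qed.

Lemma global_slope_ub (f : M -> Rbar) (x y : M) : y <> x ->
  Rbar_le (Finite (pos_diff (f x) (f y) / rho x y)) (global_slope rho f x).
Proof.
  intros Hyx. apply (proj1 (Lub_Rbar_correct _)). right. exists y. auto.
Qed.

Lemma global_slope_witness (f : M -> Rbar) (x : M) (t : R) :
  0 <= t -> Rbar_lt (Finite t) (global_slope rho f x) ->
  exists y, y <> x /\ t < pos_diff (f x) (f y) / rho x y.
Proof.
  intros Ht Hlt. apply NNPP. intros Hn. apply (Rbar_lt_not_le _ _ Hlt).
  apply (proj2 (Lub_Rbar_correct _)). intros r [-> | [y [Hyx ->]]]; simpl; [exact Ht|].
  apply Rnot_lt_le. intros Hr. apply Hn. exists y. auto.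
Qed.

Lemma ekeland_point_crit (f : M -> Rbar) (g : M -> R) (x : M) (a eps : R) :
  f x = Finite a -> 0 < eps ->
  (~ eps_crit rho f 0 x ->
     Rbar_lt (global_slope rho (fun y => Finite (g y)) x) (global_slope rho f x)) ->
  (forall y fy, f y = Finite fy -> fy - g y <= a - g x -> a <= fy + eps * rho x y) ->
  eps_crit rho f eps x.
Proof.
  intros Hfx Heps Hslope Hmin.
  assert (Hdom : dom f x) by (unfold dom; rewrite Hfx; exact I).
  split; [exact Hdom|]. apply Rbar_not_lt_le. intros Hbig.
  assert (Hncrit : ~ eps_crit rho f 0 x).
  { intros [_ H]. pose proof (Rbar_lt_le_trans _ _ _ Hbig H). simpl in *. lra. }
  destruct (Rbar_interpolate _ _ eps (Hslope Hncrit) Hbig) as [t [Hte [Hgt Htf]]].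
  destruct (global_slope_witness f x t) as [y [Hyx Hq]]; [lra | exact Htf|].
  pose proof (dist_pos x y Hyx) as Hr.
  rewrite Hfx in Hq.
  destruct (pos_diff_quotient_gt a (rho x y) t (f y)) as [fy [Efy Hfy]]; auto; [lra|].
  assert (Hgy : g x - g y <= t * rho x y).
  { apply pos_diff_quotient_le; auto.
    exact (Rbar_le_trans _ _ _ (global_slope_ub (fun y => Finite (g y)) x y Hyx) Hgt). }
  assert (Hcone : eps * rho x y <= t * rho x y) by nra.
  specialize (Hmin y fy Efy). lra.
Qed.

End GlobalSlope.

Lemma lsc_sublevel_closed (M : Type) (rho : M -> M -> R) (f : M -> Rbar) (h : M -> R) :
  is_metric rho -> lsc rho f -> metric_continuous rho h ->
  seq_closed rho (fun y => Rbar_le (f y) (Finite (h y))).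
Proof.
  intros [_ [_ [Hsym _]]] Hlsc Hh u l Hu Hl.
  apply Rbar_not_lt_le. intros Hlt.
  assert (exists a, h l < a /\ Rbar_lt (Finite a) (f l)) as [a [Hha Hfa]].
  { destruct (f l) as [r| |]; simpl in Hlt.
    - exists ((h l + r) / 2). simpl. split; lra.
    - exists (h l + 1). simpl. split; [lra | exact I].
    - contradiction. }
  destruct (Hlsc l a Hfa) as [d1 [Hd1 Hf]].
  destruct (Hh l (a - h l)) as [d2 [Hd2 Hhc]]; [lra|].
  destruct (Hl (Rmin d1 d2)) as [N HN]; [apply Rmin_glb_lt; auto|].
  specialize (HN N (le_n N)). rewrite Hsym in HN.
  assert (Hf' : Rbar_lt (Finite a) (f (u N)))
    by (apply Hf; eapply Rlt_le_trans; [exact HN | apply Rmin_l]).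
  assert (Hh' : Rabs (h (u N) - h l) < a - h l)
    by (apply Hhc; eapply Rlt_le_trans; [exact HN | apply Rmin_r]).
  pose proof (Rbar_lt_le_trans _ _ _ Hf' (Hu N)) as Hcontra. simpl in Hcontra.
  apply Rabs_def2 in Hh'. lra.
Qed.

Lemma lsc_real_part (M : Type) (rho : M -> M -> R) (f : M -> Rbar) (C : M -> Prop) :
  lsc rho f -> (forall y, C y -> f y = Finite (real (f y))) ->
  lsc_on rho C (fun y => real (f y)).
Proof.
  intros Hlsc Hfin l a Cl Ha.
  destruct (Hlsc l a) as [d [Hd H]]; [rewrite (Hfin l Cl); exact Ha|].
  exists d. split; auto. intros y Cy Hy. specialize (H y Hy).
  rewrite (Hfin y Cy) in H. exact H.
Qed.

Lemma descent_to_crit (M : Type) (rho : M -> M -> R) (f : M -> Rbar) (g : M -> R)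
  (Hmet : is_metric rho) (Hcompl : metric_complete rho)
  (Hlsc : lsc rho f) (Hbdd : bounded_below f) (Hg : metric_continuous rho g)
  (Hslope : forall x, dom f x -> ~ eps_crit rho f 0 x ->
     Rbar_lt (global_slope rho (fun y => Finite (g y)) x) (global_slope rho f x))
  (eps : R) (Heps : 0 < eps) (x0 : M) (Hx0 : dom f x0) :
  exists x, eps_crit rho f eps x /\
    Rbar_le (f x) (Rbar_minus (f x0) (Finite (eps * rho x x0))) /\
    Rbar_le (Rbar_minus (f x) (Finite (g x))) (Rbar_minus (f x0) (Finite (g x0))).
Proof.
  pose proof (bounded_below_finite M f x0 Hbdd Hx0) as Hfx0.
  set (c := real (f x0) - g x0).
  set (C := fun y => Rbar_le (f y) (Finite (c + g y))).
  assert (HCfin : forall y, C y -> f y = Finite (real (f y))).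
  { intros y Cy. apply (bounded_below_finite M f y Hbdd).
    exact (Rbar_le_lt_trans _ _ p_infty Cy I). }
  destruct (ekeland M rho C (fun y => real (f y)) eps Hmet Hcompl Heps)
    with (x0 := x0) as [x [[Cx Hx0x] Hmin]].
  - apply lsc_sublevel_closed; auto.
    intros y e He. destruct (Hg y e He) as [d [Hd H]]. exists d. split; auto.
    intros z Hz. replace (c + g z - (c + g y)) with (g z - g y) by ring. auto.
  - apply lsc_real_part; auto.
  - destruct Hbdd as [m Hm]. exists m. intros y Cy.
    specialize (Hm y). rewrite (HCfin y Cy) in Hm. exact Hm.
  - unfold C, c. rewrite Hfx0. simpl. lra.
  - pose proof (HCfin x Cx) as Hfx. unfold C in Cx. rewrite Hfx in Cx. simpl in Cx.
    exists x. split; [|split].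
    + apply (ekeland_point_crit M rho Hmet f g x (real (f x)) eps Hfx Heps).
      * apply Hslope. unfold dom. rewrite Hfx. exact I.
      * intros y fy Efy Hy.
        assert (Cy : C y) by (unfold C; rewrite Efy; simpl; lra).
        specialize (Hmin y Cy). rewrite Efy in Hmin. exact Hmin.
    + destruct Hmet as [_ [_ [Hsym _]]].
      rewrite Hfx, Hfx0, Hsym. simpl. lra.
    + rewrite Hfx, Hfx0. simpl. unfold c in Cx. lra.
Qed.

Theorem proposition3p6 (M : Type) (rho : M -> M -> R) (f : M -> Rbar) (g : M -> R)
  (Hmet : is_metric rho) (Hcompl : metric_complete rho)
  (Hproper : proper_fun f) (Hlsc : lsc rho f) (Hbdd : bounded_below f)
  (Hg : metric_continuous rho g)
  (Hslope : forall x, dom f x -> ~ eps_crit rho f 0 x ->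
     Rbar_lt (global_slope rho (fun y => Finite (g y)) x) (global_slope rho f x)) :
  (forall eps, 0 < eps -> forall x0, dom f x0 ->
     exists x, eps_crit rho f eps x /\
       Rbar_le (f x) (Rbar_minus (f x0) (Finite (eps * rho x x0))) /\
       Rbar_le (Rbar_minus (f x) (Finite (g x))) (Rbar_minus (f x0) (Finite (g x0)))) /\
  (forall y eps, dom f y -> 0 < eps ->
     Rbar_le (inf_crit rho f g eps) (Rbar_minus (f y) (Finite (g y)))).
Proof.
  pose proof (descent_to_crit M rho f g Hmet Hcompl Hlsc Hbdd Hg Hslope) as Hdescent.
  split; [exact Hdescent|].
  intros y eps Hy Heps.
  destruct (Hdescent eps Heps y Hy) as [x [Hcrit [_ Hfg]]].
  pose proof (bounded_below_finite M f x Hbdd (proj1 Hcrit)) as Hfx.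
  apply Rbar_le_trans with (Finite (real (f x) - g x)); [|rewrite Hfx in Hfg; exact Hfg].
  apply (proj1 (Glb_Rbar_correct _)). exists x. split; [exact Hcrit|].
  rewrite Hfx. reflexivity.
Qed.
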